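(* Consider the PSSG described in the context in the FULL-FULL scenario: $k_1\mu_1>2L\lambda$ and $k_2\mu_2>2L\lambda$. Define $$\theta^L_1=-\frac{k_q(q_1(L+x_2)-q_2(L-x_2))+k_l(x_2-x_1)}{k_p d},\quad \theta^R_1=\frac{k_q(q_2(L-x_1)-q_1(x_1+L))+k_l(x_2-x_1)}{k_p d},$$ $$\theta^L_2=-\frac{k_q q_1(2L)+k_l(x_2-x_1)}{k_p d},\quad \theta^R_2=\frac{k_q q_2(2L)+k_l(x_2-x_1)}{k_p d}.$$ (1) If $p_1-p_2\in[\theta^R_1,\theta^R_2)$, then the Nash equilibrium of the PSSG is: every PEV at $x\in[x_1,L]$ selects station 2 with probability 1, and every PEV at $x\in[-L,x_1)$ selects station 1 with probability $\omega_1$ and station 2 with probability $1-\omega_1$, where $\omega_1$ is the unique root in $[0,1]$ of $$k_q\Big(q_1\big((x_1+L)\omega_1\big)-q_2\big(L-x_1+(x_1+L)(1-\omega_1)\big)\Big)+k_pd(p_1-p_2)+k_l(x_1-x_2)=0.$$ (2) If $p_1-p_2\in(\theta^L_2,\theta^L_1]$, then the Nash equilibrium of the PSSG is: every PEV at $x\in[-L,x_2]$ selects station 1 with probability 1, and every PEV at $x\in(x_2,L]$ selects station 1 with probability $\omega_1$ and station 2 with probability $1-\omega_1$, where $\omega_1$ is the unique root in $[0,1]$ of $$k_q\Big(q_2\big((L-x_2)(1-\omega_1)\big)-q_1\big(x_2+L+(L-x_2)\omega_1\big)\Big)+k_pd(p_2-p_1)+k_l(x_1-x_2)=0.$$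
   Context: The system is the segment $[-L,L]$ ($L>0$) with two charging stations located at $x_1<x_2$, $-L<x_1<x_2<L$. Station $i\in\{1,2\}$ has $k_i\ge 1$ (integer) identical charging ports, PEV service times with mean $1/\mu_i$ ($\mu_i>0$) and variance $\sigma_i^2$, and announces a price $p_i\in[p_{\min},p_{\max}]$. A continuum of PEVs is uniformly distributed on $[-L,L]$, generating charging requests at rate $\lambda>0$ per unit length. Each PEV at location $x$ selects station 1 or 2, possibly at random; a strategy profile is described by the probability $\omega(x)\in[0,1]$ that the PEV at $x$ selects station 1. Let $a_1=\int_{-L}^{L}\omega(x)\,dx$ and $a_2=2L-a_1$. For $0\le a<k_i\mu_i/\lambda$, $$q_i(a)=\frac{a\lambda\,(\sigma_i^2+\frac{1}{\mu_i^2})\,\rho^{k_i-1}}{2(k_i-1)!\,(k_i-\rho)^2\Big[\sum_{m=0}^{k_i-1}\frac{\rho^m}{m!}+\frac{\rho^{k_i}}{(k_i-1)!(k_i-\rho)}\Big]},\qquad \rho=\frac{a\lambda}{\mu_i},$$ is the mean waiting time at station $i$, and $q_i(a)=+\infty$ if $a\ge k_i\mu_i/\lambda$. Given $a_1,a_2$ (which a single PEV cannot change), a PEV at $x$ selecting station $i$ gets payoff $U(i;x)=-k_l|x-x_i|-k_q\,q_i(a_i)-k_p\,d\,p_i$, with constants $k_l,k_q,k_p,d>0$; a randomized choice yields the expected payoff. A Nash equilibrium of the PSSG is a profile in which every PEV's (possibly mixed) choice maximizes its expected payoff given $a_1,a_2$. *)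

From Stdlib Require Import Reals Lra.
From Coquelicot Require Import Coquelicot.
Open Scope R_scope.

Record PSSG := mkPSSG {
  L : R; x1 : R; x2 : R;
  k1 : nat; k2 : nat;          (* number of charging ports *)
  mu1 : R; mu2 : R;            (* service rates: mean service time 1/mu_i *)
  sig1 : R; sig2 : R;          (* service-time standard deviations (variance sig_i^2) *)
  p1 : R; p2 : R; pmin : R; pmax : R;
  lam : R;                     (* request rate per unit length *)
  kl : R; kq : R; kp : R; d : R }.

Definition valid (G : PSSG) : Prop :=
  0 < L G /\ - L G < x1 G /\ x1 G < x2 G /\ x2 G < L G /\
  (1 <= k1 G)%nat /\ (1 <= k2 G)%nat /\ 0 < mu1 G /\ 0 < mu2 G /\
  pmin G <= p1 G <= pmax G /\ pmin G <= p2 G <= pmax G /\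
  0 < lam G /\ 0 < kl G /\ 0 < kq G /\ 0 < kp G /\ 0 < d G.

(** The (finite) mean-waiting-time formula, meaningful for 0 <= a < k mu / lam. *)
Definition qfin (k : nat) (mu sig lam a : R) : R :=
  let rho := a * lam / mu in
  a * lam * (sig ^ 2 + 1 / mu ^ 2) * rho ^ (k - 1) /
  (2 * INR (Factorial.fact (k - 1)) * (INR k - rho) ^ 2 *
   (sum_f_R0 (fun m => rho ^ m / INR (Factorial.fact m)) (k - 1) +
    rho ^ k / (INR (Factorial.fact (k - 1)) * (INR k - rho)))).

Definition qwait (k : nat) (mu sig lam a : R) : Rbar :=
  if Rlt_dec a (INR k * mu / lam) then Finite (qfin k mu sig lam a) else p_infty.

Definition q1 (G : PSSG) (a : R) : R := qfin (k1 G) (mu1 G) (sig1 G) (lam G) a.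
Definition q2 (G : PSSG) (a : R) : R := qfin (k2 G) (mu2 G) (sig2 G) (lam G) a.

Definition payoff (G : PSSG) (xi pi : R) (qi : Rbar) (x : R) : Rbar :=
  match qi with
  | Finite v => Finite (- kl G * Rabs (x - xi) - kq G * v - kp G * d G * pi)
  | p_infty => m_infty
  | m_infty => p_infty
  end.

Definition U1 (G : PSSG) (x a1 : R) : Rbar :=
  payoff G (x1 G) (p1 G) (qwait (k1 G) (mu1 G) (sig1 G) (lam G) a1) x.
Definition U2 (G : PSSG) (x a2 : R) : Rbar :=
  payoff G (x2 G) (p2 G) (qwait (k2 G) (mu2 G) (sig2 G) (lam G) a2) x.

(** Expected payoff of choosing station 1 with probability w (0 * (-oo) = 0). *)
Definition EU (G : PSSG) (w x a1 a2 : R) : Rbar :=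
  if Req_EM_T w 0 then U2 G x a2
  else if Req_EM_T w 1 then U1 G x a1
  else Rbar_plus (Rbar_mult w (U1 G x a1)) (Rbar_mult (1 - w) (U2 G x a2)).

Definition NashEq (G : PSSG) (omega : R -> R) : Prop :=
  (forall x, - L G <= x <= L G -> 0 <= omega x <= 1) /\
  ex_RInt omega (- L G) (L G) /\
  let a1 := RInt omega (- L G) (L G) in
  let a2 := 2 * L G - a1 in
  forall x, - L G <= x <= L G ->
  forall w, 0 <= w <= 1 -> Rbar_le (EU G w x a1 a2) (EU G (omega x) x a1 a2).

Definition full_full (G : PSSG) : Prop :=
  INR (k1 G) * mu1 G > 2 * L G * lam G /\ INR (k2 G) * mu2 G > 2 * L G * lam G.

Definition thetaL1 (G : PSSG) : R :=
  - (kq G * (q1 G (L G + x2 G) - q2 G (L G - x2 G)) + kl G * (x2 G - x1 G)) / (kp G * d G).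
Definition thetaR1 (G : PSSG) : R :=
  (kq G * (q2 G (L G - x1 G) - q1 G (x1 G + L G)) + kl G * (x2 G - x1 G)) / (kp G * d G).
Definition thetaL2 (G : PSSG) : R :=
  - (kq G * q1 G (2 * L G) + kl G * (x2 G - x1 G)) / (kp G * d G).
Definition thetaR2 (G : PSSG) : R :=
  (kq G * q2 G (2 * L G) + kl G * (x2 G - x1 G)) / (kp G * d G).

Definition F1 (G : PSSG) (w : R) : R :=
  kq G * (q1 G ((x1 G + L G) * w) - q2 G (L G - x1 G + (x1 G + L G) * (1 - w)))
  + kp G * d G * (p1 G - p2 G) + kl G * (x1 G - x2 G).
Definition F2 (G : PSSG) (w : R) : R :=
  kq G * (q2 G ((L G - x2 G) * (1 - w)) - q1 G (x2 G + L G + (L G - x2 G) * w))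
  + kp G * d G * (p2 G - p1 G) + kl G * (x1 G - x2 G).

Definition profile1 (G : PSSG) (w : R) : R -> R :=
  fun x => if Rlt_dec x (x1 G) then w else 0.
Definition profile2 (G : PSSG) (w : R) : R -> R :=
  fun x => if Rle_dec x (x2 G) then 1 else w.

(* In the FULL-FULL regime both queues stay stable whatever the split of the
   demand, and each mean waiting time q_i is continuous and strictly increasing
   on [0, 2L] (it is a positive multiple of an Erlang-C-type ratio increasing in
   the load).  Hence the root equation F1 is strictly increasing in w, and the
   price window [thetaR1, thetaR2] is exactly the condition F1 0 <= 0 <= F1 1,
   so the intermediate value theorem gives a unique root (F2 is symmetric and
   decreasing).  Given that root, PEVs left of x1 are indifferent between the
   stations while those to the right strictly prefer station 2 by the triangle
   inequality, so the profile is a best response everywhere. *)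

From Stdlib Require Import Reals Lra Lia Ranalysis5.
From Coquelicot Require Import Coquelicot.
Open Scope R_scope.

Definition exp_trunc (n : nat) (r : R) : R :=
  sum_f_R0 (fun m => r ^ m / INR (Factorial.fact m)) n.

Lemma exp_trunc_S n r :
  exp_trunc (S n) r = exp_trunc n r + r ^ S n / INR (Factorial.fact (S n)).
Proof. reflexivity. Qed.

Lemma exp_trunc_ge1 n r : 0 <= r -> 1 <= exp_trunc n r.
Proof.
  intros Hr; induction n as [|n IH].
  - unfold exp_trunc; simpl; lra.
  - rewrite exp_trunc_S.
    enough (0 <= r ^ S n / INR (Factorial.fact (S n))) by lra.
    apply Rdiv_le_0_compat; [apply pow_le; lra | apply INR_fact_lt_0].
Qed.

Lemma ex_derive_exp_trunc n r : ex_derive (exp_trunc n) r.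
Proof.
  induction n as [|n IH].
  - apply ex_derive_ext with (fun _ => 1); [intros; unfold exp_trunc; simpl; field|].
    auto_derive; auto.
  - apply ex_derive_ext with (fun r => exp_trunc n r + r ^ S n / INR (Factorial.fact (S n)));
      [reflexivity|].
    auto_derive; repeat split; auto; apply INR_fact_neq_0.
Qed.

(* Every term r^m/m! with m <= k shrinks relative to r^k as r grows. *)
Lemma exp_trunc_pow_cross_le n k r s : (n <= k)%nat -> 0 <= r <= s ->
  r ^ k * exp_trunc n s <= s ^ k * exp_trunc n r.
Proof.
  intros Hnk Hrs; induction n as [|n IH].
  - unfold exp_trunc; simpl; apply Rmult_le_compat_r; [lra | apply pow_incr; lra].
  - rewrite !exp_trunc_S, !Rmult_plus_distr_l.
    apply Rplus_le_compat; [apply IH; lia|].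
    assert (Hpow : r ^ k * s ^ S n <= s ^ k * r ^ S n).
    { replace k with (k - S n + S n)%nat by lia; rewrite !pow_add.
      replace (s ^ (k - S n) * s ^ S n * r ^ S n)
        with (s ^ (k - S n) * (r ^ S n * s ^ S n)) by ring.
      rewrite Rmult_assoc.
      apply Rmult_le_compat_r; [|apply pow_incr; lra].
      apply Rmult_le_pos; apply pow_le; lra. }
    pose proof (Rinv_0_lt_compat _ (INR_fact_lt_0 (S n))).
    unfold Rdiv; nra.
Qed.

(* Erlang-C-type load factor: [qfin (S n)] is a positive multiple of it at [r = a lam / mu]. *)
Definition load_ratio (n : nat) (r : R) : R :=
  let N := INR (S n) in
  r ^ S n /
  (INR (Factorial.fact n) * (N - r) ^ 2 * exp_trunc n r + r ^ S n * (N - r)).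

Lemma load_ratio_denom_pos n r : 0 <= r < INR (S n) ->
  0 < INR (Factorial.fact n) * (INR (S n) - r) ^ 2 * exp_trunc n r
      + r ^ S n * (INR (S n) - r).
Proof.
  intros Hr.
  pose proof (INR_fact_lt_0 n). pose proof (exp_trunc_ge1 n r (proj1 Hr)).
  pose proof (pow_le r (S n) (proj1 Hr)).
  assert (0 < INR (Factorial.fact n) * (INR (S n) - r) ^ 2 * exp_trunc n r)
    by (repeat apply Rmult_lt_0_compat; try apply pow_lt; lra).
  assert (0 <= r ^ S n * (INR (S n) - r)) by (apply Rmult_le_pos; lra).
  lra.
Qed.

Lemma load_ratio_lt n r s : 0 <= r -> r < s -> s < INR (S n) ->
  load_ratio n r < load_ratio n s.
Proof.
  intros Hr Hrs Hs. unfold load_ratio.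
  pose proof (load_ratio_denom_pos n r ltac:(lra)) as HDr.
  pose proof (load_ratio_denom_pos n s ltac:(lra)) as HDs.
  pose proof (exp_trunc_pow_cross_le n (S n) r s ltac:(lia) ltac:(lra)) as Hcross.
  pose proof (INR_fact_lt_0 n) as Hf.
  pose proof (exp_trunc_ge1 n r Hr) as HEr.
  pose proof (pow_le r (S n) Hr) as HA.
  pose proof (pow_lt s (S n) ltac:(lra)) as HB.
  set (N := INR (S n)) in *. set (f := INR (Factorial.fact n)) in *.
  set (A := r ^ S n) in *. set (B := s ^ S n) in *.
  set (Er := exp_trunc n r) in *. set (Es := exp_trunc n s) in *.
  assert (Hsq : (N - s) ^ 2 < (N - r) ^ 2)
    by (assert (0 < N - s) by lra; simpl; rewrite !Rmult_1_r; nra).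
  assert (Hcross' : A * (f * (N - s) ^ 2 * Es + B * (N - s))
                    < B * (f * (N - r) ^ 2 * Er + A * (N - r))).
  { assert (f * (N - s) ^ 2 * (A * Es) <= f * (N - s) ^ 2 * (B * Er))
      by (apply Rmult_le_compat_l; [apply Rmult_le_pos; [lra | apply pow2_ge_0] | lra]).
    assert (f * (N - s) ^ 2 * (B * Er) < f * (N - r) ^ 2 * (B * Er))
      by (apply Rmult_lt_compat_r; [apply Rmult_lt_0_compat; lra | apply Rmult_lt_compat_l; lra]).
    assert (A * B * (N - s) <= A * B * (N - r)) by (apply Rmult_le_compat_l; nra).
    nra. }
  apply (Rmult_lt_reg_r ((f * (N - r) ^ 2 * Er + A * (N - r))
                         * (f * (N - s) ^ 2 * Es + B * (N - s))));
    [apply Rmult_lt_0_compat; assumption|].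
  field_simplify; lra.
Qed.

Lemma qfin_succ n mu sig lam a : 0 < mu -> 0 < lam -> 0 <= a * lam / mu < INR (S n) ->
  qfin (S n) mu sig lam a = mu * (sig ^ 2 + 1 / mu ^ 2) / 2 * load_ratio n (a * lam / mu).
Proof.
  intros Hmu Hlam Hr.
  pose proof (load_ratio_denom_pos n _ Hr) as HD.
  pose proof (exp_trunc_ge1 n _ (proj1 Hr)) as HE.
  pose proof (INR_fact_lt_0 n) as Hf.
  unfold qfin, load_ratio; cbv zeta.
  replace (S n - 1)%nat with n by lia.
  set (r := a * lam / mu) in *. set (N := INR (S n)) in *.
  change (sum_f_R0 _ n) with (exp_trunc n r).
  assert (Har : a * lam = r * mu) by (unfold r; field; lra).
  rewrite Har; simpl pow in *.
  field; repeat split; try lra.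
  assert (0 < exp_trunc n r * (INR (Factorial.fact n) * (N - r)))
    by (repeat apply Rmult_lt_0_compat; lra).
  nra.
Qed.

Lemma qfin_0 k mu sig lam : qfin k mu sig lam 0 = 0.
Proof. unfold qfin, Rdiv; rewrite !Rmult_0_l; reflexivity. Qed.

Lemma load_bound k mu lam a : 0 < mu -> 0 < lam -> 0 <= a -> a * lam < INR k * mu ->
  0 <= a * lam / mu < INR k.
Proof.
  intros Hmu Hlam Ha Hstab; split.
  - apply Rdiv_le_0_compat; nra.
  - apply (Rmult_lt_reg_r mu); [lra|]; field_simplify; lra.
Qed.

Lemma qfin_lt k mu sig lam a b : (1 <= k)%nat -> 0 < mu -> 0 < lam ->
  0 <= a -> a < b -> b * lam < INR k * mu ->
  qfin k mu sig lam a < qfin k mu sig lam b.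
Proof.
  intros Hk Hmu Hlam Ha Hab Hstab; destruct k as [|n]; [lia|].
  pose proof (load_bound (S n) _ _ b Hmu Hlam ltac:(lra) Hstab) as Hb.
  pose proof (load_bound (S n) _ _ a Hmu Hlam Ha ltac:(nra)) as Ha'.
  rewrite !qfin_succ by assumption.
  apply Rmult_lt_compat_l.
  - pose proof (pow2_ge_0 sig). pose proof (pow_lt mu 2 Hmu).
    assert (0 < 1 / mu ^ 2) by (apply Rdiv_lt_0_compat; lra).
    apply Rdiv_lt_0_compat; nra.
  - apply load_ratio_lt; try lra.
    apply Rmult_lt_compat_r; [apply Rinv_0_lt_compat; lra | nra].
Qed.

Lemma ex_derive_qfin k mu sig lam a : (1 <= k)%nat -> 0 < mu -> 0 < lam ->
  0 <= a -> a * lam < INR k * mu -> ex_derive (qfin k mu sig lam) a.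
Proof.
  intros Hk Hmu Hlam Ha Hstab; destruct k as [|n]; [lia|].
  pose proof (load_bound _ _ _ a Hmu Hlam Ha Hstab) as Hr.
  pose proof (exp_trunc_ge1 n _ (proj1 Hr)) as HE.
  pose proof (INR_fact_lt_0 n) as Hf.
  apply ex_derive_ext with (fun a =>
    a * lam * (sig ^ 2 + 1 / mu ^ 2) * (a * lam / mu) ^ n /
    (2 * INR (Factorial.fact n) * (INR (S n) - a * lam / mu) ^ 2 *
     (exp_trunc n (a * lam / mu) +
      (a * lam / mu) ^ S n / (INR (Factorial.fact n) * (INR (S n) - a * lam / mu))))).
  { intros t; unfold qfin; replace (S n - 1)%nat with n by lia; reflexivity. }
  set (N := INR (S n)) in *.
  auto_derive; unfold Rdiv in *; repeat split.
  - apply ex_derive_exp_trunc.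
  - apply Rmult_integral_contrapositive_currified; lra.
  - simpl pow; apply Rgt_not_eq.
    assert (0 < INR (Factorial.fact n) * (N - a * lam * / mu)) by nra.
    assert (0 <= a * lam * / mu * (a * lam * / mu) ^ n * / (INR (Factorial.fact n) * (N - a * lam * / mu)))
      by (apply Rmult_le_pos; [apply Rmult_le_pos; [|apply pow_le]|left; apply Rinv_0_lt_compat]; lra).
    unfold Rminus in *; repeat apply Rmult_lt_0_compat; lra.
Qed.

Lemma qwait_stable k mu sig lam a : 0 < lam -> a * lam < INR k * mu ->
  qwait k mu sig lam a = Finite (qfin k mu sig lam a).
Proof.
  intros Hlam Hstab; unfold qwait.
  destruct (Rlt_dec a (INR k * mu / lam)) as [_|Hnot]; [reflexivity|].
  exfalso; apply Hnot, (Rmult_lt_reg_r lam); [lra|]; field_simplify; lra.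
Qed.

Lemma increasing_unique_root (f : R -> R) a b : a <= b ->
  (forall x, a <= x <= b -> continuity_pt f x) ->
  (forall x y, a <= x -> x < y -> y <= b -> f x < f y) ->
  f a <= 0 -> 0 <= f b ->
  exists! x, a <= x <= b /\ f x = 0.
Proof.
  intros Hab Hcont Hincr Ha Hb.
  assert (Hroot : exists x, a <= x <= b /\ f x = 0).
  { destruct (Req_dec (f a) 0) as [Ha0|Ha0]; [exists a; split; [lra|assumption]|].
    destruct (Req_dec (f b) 0) as [Hb0|Hb0]; [exists b; split; [lra|assumption]|].
    assert (a <> b) by (intros ->; lra).
    destruct (IVT_interv f a b Hcont) as [x Hx]; try lra.
    exists x; exact Hx. }
  destruct Hroot as [x [Hx Hfx]].
  exists x; split; [split; assumption|].
  intros y [Hy Hfy].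
  destruct (Rtotal_order x y) as [Hxy|[Hxy|Hxy]]; [|assumption|].
  - pose proof (Hincr x y ltac:(lra) Hxy ltac:(lra)); lra.
  - pose proof (Hincr y x ltac:(lra) Hxy ltac:(lra)); lra.
Qed.

Definition util (G : PSSG) (xi pi v x : R) : R :=
  - kl G * Rabs (x - xi) - kq G * v - kp G * d G * pi.

Lemma EU_finite G w x a1 a2 v1 v2 :
  qwait (k1 G) (mu1 G) (sig1 G) (lam G) a1 = Finite v1 ->
  qwait (k2 G) (mu2 G) (sig2 G) (lam G) a2 = Finite v2 ->
  EU G w x a1 a2 = Finite (w * util G (x1 G) (p1 G) v1 x + (1 - w) * util G (x2 G) (p2 G) v2 x).
Proof.
  intros H1 H2; unfold EU, U1, U2; rewrite H1, H2; simpl.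
  destruct (Req_EM_T w 0) as [->|_]; [unfold util; f_equal; ring|].
  destruct (Req_EM_T w 1) as [->|_]; [unfold util; f_equal; ring|].
  reflexivity.
Qed.

Lemma util_diff G v1 v2 x :
  util G (x1 G) (p1 G) v1 x - util G (x2 G) (p2 G) v2 x
  = kl G * (Rabs (x - x2 G) - Rabs (x - x1 G)) - kq G * (v1 - v2) - kp G * d G * (p1 G - p2 G).
Proof. unfold util; ring. Qed.

Definition best_mix (w u1 u2 : R) : Prop :=
  (w = 0 /\ u1 <= u2) \/ (w = 1 /\ u2 <= u1) \/ u1 = u2.

Lemma best_mix_max w w' u1 u2 : best_mix w u1 u2 -> 0 <= w' <= 1 ->
  w' * u1 + (1 - w') * u2 <= w * u1 + (1 - w) * u2.
Proof. intros [[Hw Hu]|[[Hw Hu]|Hu]] Hw'; try rewrite Hw; try rewrite Hu; nra. Qed.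

Lemma is_RInt_step (f : R -> R) a c b u v : a < c -> c < b ->
  (forall x, a < x < c -> f x = u) -> (forall x, c < x < b -> f x = v) ->
  is_RInt f a b ((c - a) * u + (b - c) * v).
Proof.
  intros Hac Hcb Hu Hv.
  apply (is_RInt_Chasles f a c b (scal (c - a) u) (scal (b - c) v)).
  - apply is_RInt_ext with (fun _ => u); [|apply (@is_RInt_const R_NormedModule)].
    intros x Hx; rewrite Rmin_left, Rmax_right in Hx by lra; symmetry; apply Hu; lra.
  - apply is_RInt_ext with (fun _ => v); [|apply (@is_RInt_const R_NormedModule)].
    intros x Hx; rewrite Rmin_left, Rmax_right in Hx by lra; symmetry; apply Hv; lra.
Qed.

Lemma Rabs_sub_triang x a b : Rabs (x - a) <= Rabs (x - b) + Rabs (b - a).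
Proof. replace (x - a) with ((x - b) + (b - a)) by ring; apply Rabs_triang. Qed.

Section FullFull.

Variable G : PSSG.
Hypothesis HG : valid G.
Hypothesis Hff : full_full G.

Lemma stable1 a : a <= 2 * L G -> a * lam G < INR (k1 G) * mu1 G.
Proof. destruct HG as (_&_&_&_&_&_&_&_&_&_&Hlam&_); destruct Hff; nra. Qed.

Lemma stable2 a : a <= 2 * L G -> a * lam G < INR (k2 G) * mu2 G.
Proof. destruct HG as (_&_&_&_&_&_&_&_&_&_&Hlam&_); destruct Hff; nra. Qed.

Lemma q1_lt a b : 0 <= a -> a < b -> b <= 2 * L G -> q1 G a < q1 G b.
Proof.
  destruct HG as (_&_&_&_&Hk&_&Hmu&_&_&_&Hlam&_).
  intros; apply qfin_lt; auto; apply stable1; assumption.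
Qed.

Lemma q2_lt a b : 0 <= a -> a < b -> b <= 2 * L G -> q2 G a < q2 G b.
Proof.
  destruct HG as (_&_&_&_&_&Hk&_&Hmu&_&_&Hlam&_).
  intros; apply qfin_lt; auto; apply stable2; assumption.
Qed.

Lemma ex_derive_q1 a : 0 <= a <= 2 * L G -> ex_derive (q1 G) a.
Proof.
  destruct HG as (_&_&_&_&Hk&_&Hmu&_&_&_&Hlam&_).
  intros; apply ex_derive_qfin; try tauto; apply stable1; tauto.
Qed.

Lemma ex_derive_q2 a : 0 <= a <= 2 * L G -> ex_derive (q2 G) a.
Proof.
  destruct HG as (_&_&_&_&_&Hk&_&Hmu&_&_&Hlam&_).
  intros; apply ex_derive_qfin; try tauto; apply stable2; tauto.
Qed.

Lemma qwait1_finite a : a <= 2 * L G -> qwait (k1 G) (mu1 G) (sig1 G) (lam G) a = Finite (q1 G a).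
Proof.
  destruct HG as (_&_&_&_&_&_&_&_&_&_&Hlam&_).
  intros; apply qwait_stable, stable1; assumption.
Qed.

Lemma qwait2_finite a : a <= 2 * L G -> qwait (k2 G) (mu2 G) (sig2 G) (lam G) a = Finite (q2 G a).
Proof.
  destruct HG as (_&_&_&_&_&_&_&_&_&_&Hlam&_).
  intros; apply qwait_stable, stable2; assumption.
Qed.

Lemma NashEq_of_best_mix (omega : R -> R) a1 :
  (forall x, - L G <= x <= L G -> 0 <= omega x <= 1) ->
  is_RInt omega (- L G) (L G) a1 -> 0 <= a1 <= 2 * L G ->
  (forall x, - L G <= x <= L G ->
     best_mix (omega x) (util G (x1 G) (p1 G) (q1 G a1) x)
                        (util G (x2 G) (p2 G) (q2 G (2 * L G - a1)) x)) ->
  NashEq G omega.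
Proof.
  intros Hrange Hint Ha1 Hbest.
  split; [exact Hrange|]; split; [exists a1; exact Hint|].
  rewrite (is_RInt_unique _ _ _ _ Hint); cbv zeta.
  intros x Hx w Hw.
  rewrite !(EU_finite G _ x a1 (2 * L G - a1) (q1 G a1) (q2 G (2 * L G - a1)))
    by (apply qwait1_finite || apply qwait2_finite; lra).
  apply best_mix_max; auto.
Qed.

Lemma kp_d_pos : 0 < kp G /\ 0 < d G.
Proof. destruct HG as (_&_&_&_&_&_&_&_&_&_&_&_&_&Hkp&Hd); split; assumption. Qed.

Lemma kpd_pos : 0 < kp G * d G.
Proof. destruct kp_d_pos; apply Rmult_lt_0_compat; assumption. Qed.

Lemma F1_0 : F1 G 0 = kp G * d G * (p1 G - p2 G - thetaR2 G).
Proof.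
  pose proof kp_d_pos. unfold F1, thetaR2, q1.
  replace ((x1 G + L G) * 0) with 0 by ring; rewrite qfin_0.
  replace (L G - x1 G + (x1 G + L G) * (1 - 0)) with (2 * L G) by ring.
  field; split; lra.
Qed.

Lemma F1_1 : F1 G 1 = kp G * d G * (p1 G - p2 G - thetaR1 G).
Proof.
  pose proof kp_d_pos. unfold F1, thetaR1.
  replace ((x1 G + L G) * 1) with (x1 G + L G) by ring.
  replace (L G - x1 G + (x1 G + L G) * (1 - 1)) with (L G - x1 G) by ring.
  field; split; lra.
Qed.

Lemma F2_0 : F2 G 0 = kp G * d G * (thetaL1 G - (p1 G - p2 G)).
Proof.
  pose proof kp_d_pos. unfold F2, thetaL1.
  replace ((L G - x2 G) * (1 - 0)) with (L G - x2 G) by ring.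
  replace (x2 G + L G + (L G - x2 G) * 0) with (L G + x2 G) by ring.
  field; split; lra.
Qed.

Lemma F2_1 : F2 G 1 = kp G * d G * (thetaL2 G - (p1 G - p2 G)).
Proof.
  pose proof kp_d_pos. unfold F2, thetaL2, q2.
  replace ((L G - x2 G) * (1 - 1)) with 0 by ring; rewrite qfin_0.
  replace (x2 G + L G + (L G - x2 G) * 1) with (2 * L G) by ring.
  field; split; lra.
Qed.

Lemma F1_increasing u v : 0 <= u -> u < v -> v <= 1 -> F1 G u < F1 G v.
Proof.
  destruct HG as (HL&Hx1&H12&Hx2&_&_&_&_&_&_&_&_&Hkq&_).
  intros Hu Huv Hv; unfold F1.
  pose proof (q1_lt ((x1 G + L G) * u) ((x1 G + L G) * v) ltac:(nra) ltac:(nra) ltac:(nra)).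
  pose proof (q2_lt (L G - x1 G + (x1 G + L G) * (1 - v)) (L G - x1 G + (x1 G + L G) * (1 - u))
                ltac:(nra) ltac:(nra) ltac:(nra)).
  nra.
Qed.

Lemma F2_decreasing u v : 0 <= u -> u < v -> v <= 1 -> F2 G v < F2 G u.
Proof.
  destruct HG as (HL&Hx1&H12&Hx2&_&_&_&_&_&_&_&_&Hkq&_).
  intros Hu Huv Hv; unfold F2.
  pose proof (q1_lt (x2 G + L G + (L G - x2 G) * u) (x2 G + L G + (L G - x2 G) * v)
                ltac:(nra) ltac:(nra) ltac:(nra)).
  pose proof (q2_lt ((L G - x2 G) * (1 - v)) ((L G - x2 G) * (1 - u))
                ltac:(nra) ltac:(nra) ltac:(nra)).
  nra.
Qed.

Lemma F1_continuous w : 0 <= w <= 1 -> continuity_pt (F1 G) w.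
Proof.
  destruct HG as (HL&Hx1&H12&Hx2&_).
  intros Hw; apply continuity_pt_filterlim.
  assert (Hd : ex_derive (F1 G) w).
  { unfold F1; auto_derive; repeat split; [apply ex_derive_q1 | apply ex_derive_q2]; nra. }
  exact (ex_derive_continuous _ _ Hd).
Qed.

Lemma F2_continuous w : 0 <= w <= 1 -> continuity_pt (F2 G) w.
Proof.
  destruct HG as (HL&Hx1&H12&Hx2&_).
  intros Hw; apply continuity_pt_filterlim.
  assert (Hd : ex_derive (F2 G) w).
  { unfold F2; auto_derive; repeat split; [apply ex_derive_q2 | apply ex_derive_q1]; nra. }
  exact (ex_derive_continuous _ _ Hd).
Qed.

Lemma F1_unique_root : thetaR1 G <= p1 G - p2 G <= thetaR2 G ->
  exists! w, 0 <= w <= 1 /\ F1 G w = 0.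
Proof.
  intros Htheta; pose proof kpd_pos.
  apply increasing_unique_root.
  - lra.
  - exact F1_continuous.
  - exact F1_increasing.
  - rewrite F1_0; nra.
  - rewrite F1_1; nra.
Qed.

Lemma F2_unique_root : thetaL2 G <= p1 G - p2 G <= thetaL1 G ->
  exists! w, 0 <= w <= 1 /\ F2 G w = 0.
Proof.
  intros Htheta; pose proof kpd_pos.
  destruct (increasing_unique_root (fun w => - F2 G w) 0 1) as [w [[Hw Hroot] Huniq]].
  - lra.
  - intros x Hx; apply continuity_pt_opp, F2_continuous; assumption.
  - intros u v Hu Huv Hv; pose proof (F2_decreasing u v Hu Huv Hv); lra.
  - rewrite F2_0; nra.
  - rewrite F2_1; nra.
  - exists w; split; [split; [assumption | lra]|].
    intros w' [Hw' Hroot']; apply Huniq; split; [assumption | lra].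
Qed.

Lemma profile1_NashEq w : 0 <= w <= 1 -> F1 G w = 0 -> NashEq G (profile1 G w).
Proof.
  destruct HG as (HL&Hx1&H12&Hx2&_&_&_&_&_&_&_&Hkl&_).
  intros Hw Hroot.
  apply NashEq_of_best_mix with ((x1 G - - L G) * w + (L G - x1 G) * 0).
  - intros x _; unfold profile1; destruct (Rlt_dec x (x1 G)); lra.
  - apply is_RInt_step; try lra; intros x Hx; unfold profile1;
      destruct (Rlt_dec x (x1 G)); lra.
  - split; nra.
  - intros x Hx.
    replace ((x1 G - - L G) * w + (L G - x1 G) * 0) with ((x1 G + L G) * w) by ring.
    replace (2 * L G - (x1 G + L G) * w) with (L G - x1 G + (x1 G + L G) * (1 - w)) by ring.
    assert (Hdiff := util_diff G (q1 G ((x1 G + L G) * w))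
                       (q2 G (L G - x1 G + (x1 G + L G) * (1 - w))) x).
    unfold F1 in Hroot.
    unfold profile1; destruct (Rlt_dec x (x1 G)) as [Hleft|Hright].
    + right; right.
      rewrite Rabs_left in Hdiff by lra; rewrite Rabs_left in Hdiff by lra.
      lra.
    + left; split; [reflexivity|].
      pose proof (Rabs_sub_triang x (x2 G) (x1 G)) as Htri.
      rewrite (Rabs_left (x1 G - x2 G)) in Htri by lra.
      nra.
Qed.

Lemma profile2_NashEq w : 0 <= w <= 1 -> F2 G w = 0 -> NashEq G (profile2 G w).
Proof.
  destruct HG as (HL&Hx1&H12&Hx2&_&_&_&_&_&_&_&Hkl&_).
  intros Hw Hroot.
  apply NashEq_of_best_mix with ((x2 G - - L G) * 1 + (L G - x2 G) * w).
  - intros x _; unfold profile2; destruct (Rle_dec x (x2 G)); lra.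
  - apply is_RInt_step; try lra; intros x Hx; unfold profile2;
      destruct (Rle_dec x (x2 G)); lra.
  - split; nra.
  - intros x Hx.
    replace ((x2 G - - L G) * 1 + (L G - x2 G) * w) with (x2 G + L G + (L G - x2 G) * w) by ring.
    replace (2 * L G - (x2 G + L G + (L G - x2 G) * w)) with ((L G - x2 G) * (1 - w)) by ring.
    assert (Hdiff := util_diff G (q1 G (x2 G + L G + (L G - x2 G) * w))
                       (q2 G ((L G - x2 G) * (1 - w))) x).
    unfold F2 in Hroot.
    unfold profile2; destruct (Rle_dec x (x2 G)) as [Hleft|Hright].
    + right; left; split; [reflexivity|].
      pose proof (Rabs_sub_triang x (x1 G) (x2 G)) as Htri.
      rewrite (Rabs_right (x2 G - x1 G)) in Htri by lra.
      nra.
    + right; right.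
      rewrite Rabs_right in Hdiff by lra; rewrite Rabs_right in Hdiff by lra.
      lra.
Qed.

End FullFull.

Theorem theorem2 (G : PSSG) :
  valid G -> full_full G ->
  (thetaR1 G <= p1 G - p2 G < thetaR2 G ->
     (exists! w, 0 <= w <= 1 /\ F1 G w = 0) /\
     (forall w, 0 <= w <= 1 -> F1 G w = 0 -> NashEq G (profile1 G w))) /\
  (thetaL2 G < p1 G - p2 G <= thetaL1 G ->
     (exists! w, 0 <= w <= 1 /\ F2 G w = 0) /\
     (forall w, 0 <= w <= 1 -> F2 G w = 0 -> NashEq G (profile2 G w))).
Proof.
  intros HG Hff; split; intros Htheta; split.
  - apply F1_unique_root; auto; lra.
  - intros w Hw Hroot; apply profile1_NashEq; assumption.
  - apply F2_unique_root; auto; lra.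
  - intros w Hw Hroot; apply profile2_NashEq; assumption.
Qed.
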